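(* Let $\alpha$ be a positive rational number and $v\in\widetilde V$. If $\rho_\alpha(v)=\alpha+4$, then $\alpha$ is an integer.
   Context: For real $\alpha>0$ put $t=\alpha+2$, $u_0=0$, $u_1=1$, $u_{i+2}=tu_{i+1}-u_i$; $\rho_\alpha(0)=0$ and $\rho_\alpha(n)=1+\frac{u_{n-1}}{u_n+1}$ for $n\in\mathbb{N}$. $\widetilde V$ is the set of infinite nonincreasing sequences of nonnegative integers that are eventually $0$, and $\rho_\alpha(v)=\sum_i\rho_\alpha(v_i)$. *)

From mathcomp Require Import all_boot all_order all_algebra.
Set Implicit Arguments. Unset Strict Implicit. Unset Printing Implicit Defensive.
Import Order.TTheory GRing.Theory Num.Theory.
Local Open Scope ring_scope.

Fixpoint upair (t : rat) (n : nat) : rat * rat :=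
  match n with
  | 0%N => (0, 1)
  | m.+1 => let p := upair t m in (p.2, t * p.2 - p.1)
  end.

Definition u (t : rat) (n : nat) : rat := (upair t n).1.

Definition rho (alpha : rat) (n : nat) : rat :=
  match n with
  | 0%N => 0
  | m.+1 => 1 + u (alpha + 2) m / (u (alpha + 2) m.+1 + 1)
  end.

(* v in V~ : nonincreasing, eventually zero sequence of naturals *)
Definition nonincreasing_seq (v : nat -> nat) : Prop :=
  forall i j : nat, (i <= j)%N -> (v j <= v i)%N.

(* rho_alpha(v) = sum_i rho_alpha(v_i); if v_i = 0 for all i >= N this is the
   finite sum over i < N (independent of such N since rho_alpha(0) = 0). *)
Definition rhoV (alpha : rat) (v : nat -> nat) (N : nat) : rat :=
  \sum_(i < N) rho alpha (v i).

(* The denominator of every rho_alpha(n) is coprime to the denominator b of t = alpha + 2: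
   the scaled terms u_{n+1} b^n are integers congruent to (t b)^n modulo b, so
   rho_alpha(n + 2) = 1 + b u_{n+1} b^n / (u_{n+2} b^{n+1} + b^{n+1}) has such a
   denominator.  Sums keep this property, hence so does t = rho_alpha(v) - 2; since b
   is the denominator of t itself, b = 1. *)

From mathcomp Require Import all_boot all_order all_algebra.
From mathcomp Require Import ring.
Import Order.TTheory GRing.Theory Num.Theory.
Local Open Scope ring_scope.

Lemma coprimezMDl (q m n : int) : coprimez (q * m + n) m = coprimez n m.
Proof. by rewrite !(coprimez_sym _ m) /coprimez gcdzMDl. Qed.

Definition den_coprime (b : int) (x : rat) : Prop :=
  exists2 d : int, coprimez d b & x * d%:~R \is a Num.int.

Section DenCoprime.
Variable b : int.

Lemma den_coprime_int (k : int) : den_coprime b k%:~R.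
Proof. by exists 1; rewrite ?mulr1 ?intr_int // /coprimez gcd1z. Qed.

Lemma den_coprimeD x y : den_coprime b x -> den_coprime b y -> den_coprime b (x + y).
Proof.
move=> [d1 cop1 xd1] [d2 cop2 yd2]; exists (d1 * d2); first by rewrite coprimezMl cop1.
have -> : (x + y) * (d1 * d2)%:~R = x * d1%:~R * d2%:~R + y * d2%:~R * d1%:~R.
  by rewrite rmorphM /=; ring.
by rewrite rpredD // rpredM // intr_int.
Qed.

Lemma den_coprime_frac (p q : int) : coprimez q b -> den_coprime b (p%:~R / q%:~R).
Proof.
exists q => //; have [->|q_neq0] := eqVneq q 0; first by rewrite mulr0 rpred0.
by rewrite divfK ?intr_eq0 // intr_int.
Qed.

End DenCoprime.

Lemma den_coprime_denq x : den_coprime (denq x) x -> x \is a Num.int.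
Proof.
move=> [d cop /intrP [k xdE]].
have den_dvd_num_d : (denq x %| numq x * d)%Z.
  apply/dvdzP; exists k; apply/eqP; rewrite -(eqr_int rat) !rmorphM /= numqE.
  by rewrite -xdE; apply/eqP; ring.
have cop_den_num : coprimez (denq x) (numq x).
  by rewrite coprimez_sym coprimezE coprime_num_den.
rewrite Gauss_dvdzr // in den_dvd_num_d.
have : (denq x %| gcdz d (denq x))%Z by rewrite dvdz_gcd den_dvd_num_d dvdzz.
by rewrite (eqP cop) dvdz1 => /eqP den1; rewrite Qint_def -absz_denq den1.
Qed.

Section ScaledRecurrence.
Variable t : rat.
Local Notation b := (denq t).

Lemma uS n : u t n.+2 = t * u t n.+1 - u t n.
Proof. by []. Qed.

(* w_n = u_{n+1} b^n satisfies w_{n+2} = (t b) w_{n+1} - b^2 w_n with t b = numq t. *)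
Lemma u_scaled_int n : exists w w' : int,
  [/\ u t n.+1 * b%:~R ^+ n = w%:~R, u t n.+2 * b%:~R ^+ n.+1 = w'%:~R
    & coprimez w' b].
Proof.
have cop_num_den : coprimez (numq t) b by rewrite coprimezE coprime_num_den.
elim: n => [|n [w [w' [wE w'E cop_w']]]].
  exists 1, (numq t); split=> //.
  by rewrite uS /u /= subr0 mulr1 expr1 numqE.
exists w', (numq t * w' - b ^+ 2 * w); split=> //.
  have -> : u t n.+3 * b%:~R ^+ n.+2 =
      t * b%:~R * (u t n.+2 * b%:~R ^+ n.+1) - b%:~R ^+ 2 * (u t n.+1 * b%:~R ^+ n).
    by rewrite uS !exprS; ring.
  by rewrite -numqE w'E wE rmorphB /= !rmorphM.
have -> : numq t * w' - b ^+ 2 * w = (- (b * w)) * b + numq t * w' by ring.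
by rewrite coprimezMDl coprimezMl cop_num_den.
Qed.

Lemma den_coprime_u_ratio n : den_coprime b (u t n / (u t n.+1 + 1)).
Proof.
case: n => [|m]; first by rewrite /u /= mul0r; apply: (den_coprime_int _ 0).
have [w [w' [wE w'E cop_w']]] := u_scaled_int m.
have b_neq0 : b%:~R != 0 :> rat by rewrite intr_eq0 denq_neq0.
have bX_neq0 k : b%:~R ^+ k != 0 :> rat by rewrite expf_neq0.
have u1E : u t m.+1 = w%:~R / b%:~R ^+ m by rewrite -wE mulfK.
have u2E : u t m.+2 + 1 = (w' + b ^+ m.+1)%:~R / b%:~R ^+ m.+1.
  by rewrite rmorphD /= rmorphXn -w'E; field; rewrite bX_neq0.
(* Also valid when u_{m+2} + 1 = 0, as both sides are then 0 (x / 0 = 0). *)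
have -> : u t m.+1 / (u t m.+2 + 1) = (w * b)%:~R / (w' + b ^+ m.+1)%:~R.
  rewrite u1E u2E invf_div rmorphM /= !mulrA; congr (_ * _).
  by rewrite exprS; field.
by apply: den_coprime_frac; rewrite addrC exprS mulrC coprimezMDl.
Qed.

End ScaledRecurrence.

Lemma den_coprime_rho alpha n : den_coprime (denq (alpha + 2)) (rho alpha n).
Proof.
case: n => [|n]; first exact: (den_coprime_int _ 0).
apply: den_coprimeD; [exact: (den_coprime_int _ 1) | exact: den_coprime_u_ratio].
Qed.

Theorem proposition4 (alpha : rat) (v : nat -> nat) (N : nat) :
  0 < alpha ->
  nonincreasing_seq v ->
  (forall i : nat, (N <= i)%N -> v i = 0%N) ->
  rhoV alpha v N = alpha + 4 ->
  alpha \is a Num.int.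
Proof.
move=> _ _ _ rhoVE.
have sum_den_coprime : den_coprime (denq (alpha + 2)) (rhoV alpha v N).
  apply: (big_ind (den_coprime _)); first exact: (den_coprime_int _ 0).
    exact: den_coprimeD.
  by move=> i _; apply: den_coprime_rho.
have t_int : alpha + 2 \is a Num.int.
  apply: den_coprime_denq.
  have tE : alpha + 2 = rhoV alpha v N + (- 2)%:~R by rewrite rhoVE; ring.
  by rewrite [X in den_coprime _ X]tE; apply: den_coprimeD (den_coprime_int _ _).
by rewrite -(addrK 2 alpha) rpredB.
Qed.
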